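(* Let $w_1, w_2 \geq 0$ with $w_1 + w_2 > 0$, and let $\sigma\approx 2.14790$ be the unique positive real root of $x^4 - 3x^2 - 3x - 1$. Both for the class of symmetric simultaneous two-player weighted congestion games with affine costs, proportional cost functions and player weights $w_1,w_2$, and for its subclass of network routing games, the price of anarchy (with respect to pure Nash equilibria) is equal to \begin{enumerate} \item[(a)] $\dfrac{ 2w_1^4 + 6w_1^3w_2 + 8w_1^2w_2^2 + 6w_1w_2^3 + 2w_2^4 }{ 2w_1^4 + 3w_1^3w_2 + 4w_1^2w_2^2 + 3w_1w_2^3 + 2w_2^4 + w_1w_2 \min(w_1^2,w_2^2) }$ if $\frac{w_2}{\sigma} \leq w_1 \leq \sigma w_2$; \item[(b)] $\dfrac{ 2w_1^3w_2 + 4w_1^2w_2^2 + 2w_1w_2^3 + 2\max(w_1^4+w_1^3w_2,\,w_1w_2^3+w_2^4) }{ w_1^3w_2 + 2w_1^2w_2^2 + w_1w_2^3 + 2w_1w_2 \min(w_1^2,w_2^2) + 2\max(w_1^4,w_2^4) + \min(w_1^4,w_2^4) }$ if $w_1 \geq \sigma w_2$ or $w_1 \leq \frac{w_2}{\sigma}$. \end{enumerate}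
   Context: A weighted two-player congestion game with affine costs consists of a finite set $R$ of resources, coefficients $\alpha_r,\beta_r \geq 0$ for each $r\in R$, two players $i=1,2$ with weights $w_i\ge 0$, and for each player $i$ a nonempty finite set $\mathcal{A}_i \subseteq 2^R$ of actions; it is symmetric if $\mathcal{A}_1=\mathcal{A}_2$. In a network routing game, $R$ is the arc set of a directed graph, player $i$ has a source $s_i$ and sink $t_i$, and $\mathcal{A}_i$ is the set of arc sets of directed $s_i$–$t_i$ paths (symmetric: common source and common sink). For an action profile $A=(A_1,A_2)$ the load of $r$ is $x_r(A)=\sum_{j:\, r\in A_j} w_j$. With proportional costs, player $i$ pays $C_i(A)=w_i\sum_{r\in A_i}(\alpha_r+\beta_r x_r(A))$. The social cost is $C(A)=C_1(A)+C_2(A)$. A pure Nash equilibrium is a profile from which no player can lower her cost by unilaterally changing her action. The price of anarchy of an instance is the maximum over Nash equilibria $A$ of $C(A)/\min_{A'} C(A')$; the price of anarchy of a class is the supremum over all instances (with positive optimal social cost). *)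

From HB Require Import structures.
From mathcomp Require Import all_boot all_order all_algebra.
From mathcomp Require Import reals.
Set Implicit Arguments. Unset Strict Implicit. Unset Printing Implicit Defensive.
Import Order.TTheory GRing.Theory Num.Theory.
Local Open Scope ring_scope.

(* A symmetric two-player congestion game with affine costs on resource type T:
   coefficients alpha, beta and the common action set (a predicate on subsets). *)
Record sym_game (R : realType) (T : finType) := SymGame {
  alpha : T -> R;
  beta  : T -> R;
  acts  : {set T} -> Prop }.

Definition wf_game (R : realType) (T : finType) (g : sym_game R T) : Prop :=
  (forall r, 0 <= alpha g r) /\ (forall r, 0 <= beta g r) /\ exists A, acts g A.

Definition load (R : realType) (T : finType) (w1 w2 : R) (A1 A2 : {set T}) (r : T) : R :=
  (if r \in A1 then w1 else 0) + (if r \in A2 then w2 else 0).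

Definition pcost (R : realType) (T : finType) (g : sym_game R T) (w1 w2 wi : R)
    (A1 A2 Ai : {set T}) : R :=
  wi * \sum_(r in Ai) (alpha g r + beta g r * load w1 w2 A1 A2 r).

Definition cost1 R T (g : sym_game R T) (w1 w2 : R) (A1 A2 : {set T}) : R :=
  pcost g w1 w2 w1 A1 A2 A1.
Definition cost2 R T (g : sym_game R T) (w1 w2 : R) (A1 A2 : {set T}) : R :=
  pcost g w1 w2 w2 A1 A2 A2.
Definition social_cost R T (g : sym_game R T) (w1 w2 : R) (A1 A2 : {set T}) : R :=
  cost1 g w1 w2 A1 A2 + cost2 g w1 w2 A1 A2.

Definition feasible R T (g : sym_game R T) (A1 A2 : {set T}) : Prop :=
  acts g A1 /\ acts g A2.

Definition is_NE R T (g : sym_game R T) (w1 w2 : R) (A1 A2 : {set T}) : Prop :=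
  feasible g A1 A2 /\
  (forall B, acts g B -> cost1 g w1 w2 A1 A2 <= cost1 g w1 w2 B A2) /\
  (forall B, acts g B -> cost2 g w1 w2 A1 A2 <= cost2 g w1 w2 A1 B).

Definition is_opt R T (g : sym_game R T) (w1 w2 : R) (O1 O2 : {set T}) : Prop :=
  feasible g O1 O2 /\
  (forall B1 B2, feasible g B1 B2 -> social_cost g w1 w2 O1 O2 <= social_cost g w1 w2 B1 B2).

Definition game_class (R : realType) := forall T : finType, sym_game R T -> Prop.

Definition all_games (R : realType) : game_class R := fun T g => wf_game g.

(* Directed (multi)graph with arc set T, vertex set V, tail/head maps. *)
Fixpoint walk (T V : finType) (tl hd : T -> V) (u : V) (p : seq T) : bool :=
  match p with
  | [::] => true
  | e :: p' => (tl e == u) && walk tl hd (hd e) p'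
  end.

Definition st_path (T V : finType) (tl hd : T -> V) (s t : V) (p : seq T) : bool :=
  [&& walk tl hd s p, last s (map hd p) == t & uniq (s :: map hd p)].

Definition network_games (R : realType) : game_class R := fun T g =>
  wf_game g /\
  exists (V : finType) (tl hd : T -> V) (s t : V),
    forall A : {set T}, acts g A <-> exists p : seq T, st_path tl hd s t p /\ A = [set e in p].

(* The price of anarchy of class cls (for weights w1 w2) equals v:
   v is the supremum of C(A)/C(O) over instances with positive optimal
   social cost, Nash equilibria A, and optima O. *)
Definition PoA_eq (R : realType) (cls : game_class R) (w1 w2 v : R) : Prop :=
  (forall (T : finType) (g : sym_game R T), cls T g ->
     forall A1 A2 O1 O2, is_NE g w1 w2 A1 A2 -> is_opt g w1 w2 O1 O2 ->
       0 < social_cost g w1 w2 O1 O2 ->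
       social_cost g w1 w2 A1 A2 / social_cost g w1 w2 O1 O2 <= v) /\
  (forall eps : R, 0 < eps ->
     exists (T : finType) (g : sym_game R T) A1 A2 O1 O2,
       [/\ cls T g, is_NE g w1 w2 A1 A2, is_opt g w1 w2 O1 O2,
           0 < social_cost g w1 w2 O1 O2 &
           v - eps < social_cost g w1 w2 A1 A2 / social_cost g w1 w2 O1 O2]).

Definition poa_a (R : realType) (w1 w2 : R) : R :=
  (2 * w1 ^+ 4 + 6 * w1 ^+ 3 * w2 + 8 * w1 ^+ 2 * w2 ^+ 2 + 6 * w1 * w2 ^+ 3 + 2 * w2 ^+ 4) /
  (2 * w1 ^+ 4 + 3 * w1 ^+ 3 * w2 + 4 * w1 ^+ 2 * w2 ^+ 2 + 3 * w1 * w2 ^+ 3 + 2 * w2 ^+ 4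
   + w1 * w2 * Num.min (w1 ^+ 2) (w2 ^+ 2)).

Definition poa_b (R : realType) (w1 w2 : R) : R :=
  (2 * w1 ^+ 3 * w2 + 4 * w1 ^+ 2 * w2 ^+ 2 + 2 * w1 * w2 ^+ 3
   + 2 * Num.max (w1 ^+ 4 + w1 ^+ 3 * w2) (w1 * w2 ^+ 3 + w2 ^+ 4)) /
  (w1 ^+ 3 * w2 + 2 * w1 ^+ 2 * w2 ^+ 2 + w1 * w2 ^+ 3 + 2 * w1 * w2 * Num.min (w1 ^+ 2) (w2 ^+ 2)
   + 2 * Num.max (w1 ^+ 4) (w2 ^+ 4) + Num.min (w1 ^+ 4) (w2 ^+ 4)).

From HB Require Import structures.
From mathcomp Require Import all_boot all_order all_algebra.
From mathcomp Require Import reals.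
From mathcomp Require Import ring lra.
Set Implicit Arguments. Unset Strict Implicit. Unset Printing Implicit Defensive.
Import Order.TTheory GRing.Theory Num.Theory.
Local Open Scope ring_scope.

(* Upper bound: for an equilibrium [(A1, A2)] and an optimum [(O1, O2)], add
   to [D C(A) <= N C(O)] the equilibrium inequalities in which player 1
   deviates to [O1] or [O2] and player 2 to [O2] or [O1] (the game is
   symmetric), with multipliers polynomial in the weights.  The sum splits
   over resources; the share of a resource is linear in its coefficients
   [alpha], [beta], and for each of the 16 ways it can meet the four actions
   it becomes, after writing [w1 = w2 + u] (resp. [w1 = 2 w2 + u]), a
   polynomial in [u, w2 >= 0] with nonnegative coefficients plus a
   nonnegative multiple of [+/- w2^3 q(w1 / w2)], [q x = x^3 - x^2 - 2 x - 1].
   As sigma is the positive root of [q], the sign of [q(w1 / w2)] is exactly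
   what separates the two regimes.
   Lower bound: two small networks with linear costs, for which the ratio is
   attained by an equilibrium.  Both bounds are symmetric in the weights, so
   we may assume [w2 <= w1]. *)

Ltac nonneg := repeat first
  [ done | assumption | apply: ler0n | apply: addr_ge0 | apply: mulr_ge0 | apply: exprn_ge0 ].

(** * Exchanging the players *)

Section PlayerSwap.
Variable R : realType.

Lemma load_swap (T : finType) (w1 w2 : R) (A1 A2 : {set T}) r :
  load w1 w2 A1 A2 r = load w2 w1 A2 A1 r.
Proof. by rewrite /load addrC. Qed.

Lemma cost1_swap (T : finType) (g : sym_game R T) (w1 w2 : R) A1 A2 :
  cost1 g w1 w2 A1 A2 = cost2 g w2 w1 A2 A1.
Proof. by rewrite /cost1 /cost2 /pcost; under eq_bigr do rewrite load_swap. Qed.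

Lemma cost2_swap (T : finType) (g : sym_game R T) (w1 w2 : R) A1 A2 :
  cost2 g w1 w2 A1 A2 = cost1 g w2 w1 A2 A1.
Proof. by rewrite cost1_swap. Qed.

Lemma social_cost_swap (T : finType) (g : sym_game R T) (w1 w2 : R) A1 A2 :
  social_cost g w1 w2 A1 A2 = social_cost g w2 w1 A2 A1.
Proof. by rewrite /social_cost (cost1_swap g w1) (cost2_swap g w1) addrC. Qed.

Lemma is_NE_swap (T : finType) (g : sym_game R T) (w1 w2 : R) A1 A2 :
  is_NE g w1 w2 A1 A2 -> is_NE g w2 w1 A2 A1.
Proof.
move=> [[A1_act A2_act] [NE1 NE2]]; split=> //; split=> B B_act.
- by rewrite -!cost2_swap; apply: NE2.
- by rewrite -!cost1_swap; apply: NE1.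
Qed.

Lemma is_opt_swap (T : finType) (g : sym_game R T) (w1 w2 : R) O1 O2 :
  is_opt g w1 w2 O1 O2 -> is_opt g w2 w1 O2 O1.
Proof.
move=> [[O1_act O2_act] opt]; split=> // B1 B2 [B1_act B2_act].
by rewrite !(social_cost_swap g w2); apply: opt.
Qed.

Lemma PoA_eq_swap (cls : game_class R) (w1 w2 v : R) :
  PoA_eq cls w1 w2 v -> PoA_eq cls w2 w1 v.
Proof.
move=> [ub lb]; split=> [T g g_cls A1 A2 O1 O2 NE opt SO_gt0 | eps eps_gt0].
  rewrite !(social_cost_swap g w2) in SO_gt0 *.
  by apply: ub => //; [apply: is_NE_swap | apply: is_opt_swap].
have [T [g [A1 [A2 [O1 [O2 [g_cls NE opt SO_gt0 close]]]]]]] := lb eps eps_gt0.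
exists T, g, A2, A1, O2, O1; rewrite !(social_cost_swap g w2).
by split=> //; [apply: is_NE_swap | apply: is_opt_swap].
Qed.

End PlayerSwap.

Section PoABounds.
Variable R : realType.

Definition poa_ub (cls : game_class R) (w1 w2 v : R) : Prop :=
  forall (T : finType) (g : sym_game R T), cls T g ->
  forall A1 A2 O1 O2, is_NE g w1 w2 A1 A2 -> is_opt g w1 w2 O1 O2 ->
    0 < social_cost g w1 w2 O1 O2 ->
    social_cost g w1 w2 A1 A2 / social_cost g w1 w2 O1 O2 <= v.

Definition poa_attained (cls : game_class R) (w1 w2 v : R) : Prop :=
  exists (T : finType) (g : sym_game R T) A1 A2 O1 O2,
    [/\ cls T g, is_NE g w1 w2 A1 A2, is_opt g w1 w2 O1 O2,
        0 < social_cost g w1 w2 O1 O2 &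
        social_cost g w1 w2 A1 A2 / social_cost g w1 w2 O1 O2 = v].

Definition PoA_eq_both (w1 w2 v : R) : Prop :=
  PoA_eq (@all_games R) w1 w2 v /\ PoA_eq (@network_games R) w1 w2 v.

Lemma PoA_eq_both_swap (w1 w2 v : R) : PoA_eq_both w1 w2 v -> PoA_eq_both w2 w1 v.
Proof. by case=> [all net]; split; apply: PoA_eq_swap. Qed.

Lemma PoA_eq_both_of_bounds (w1 w2 v : R) :
  poa_ub (@all_games R) w1 w2 v -> poa_attained (@network_games R) w1 w2 v ->
  PoA_eq_both w1 w2 v.
Proof.
move=> ub [T [g [A1 [A2 [O1 [O2 [[g_wf g_net] NE opt SO_gt0 ratio]]]]]]].
have close eps : 0 < eps ->
    v - eps < social_cost g w1 w2 A1 A2 / social_cost g w1 w2 O1 O2.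
  by rewrite ratio; lra.
split; split.
- exact: ub.
- by move=> eps /close; exists T, g, A1, A2, O1, O2.
- by move=> T' g' [g'_wf _]; apply: ub.
- by move=> eps /close; exists T, g, A1, A2, O1, O2.
Qed.

Definition res_load (w1 w2 : R) (x1 x2 : bool) : R :=
  (if x1 then w1 else 0) + (if x2 then w2 else 0).

Definition res_cost (a b w : R) (x : bool) (l : R) : R :=
  if x then w * (a + b * l) else 0.

Lemma cost1E (T : finType) (g : sym_game R T) (w1 w2 : R) A1 A2 :
  cost1 g w1 w2 A1 A2 = \sum_r
    res_cost (alpha g r) (beta g r) w1 (r \in A1) (res_load w1 w2 (r \in A1) (r \in A2)).
Proof.
rewrite /cost1 /pcost mulr_sumr big_mkcond; apply: eq_bigr => r _.
by rewrite /res_cost /load /res_load; case: (r \in A1).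
Qed.

Lemma cost2E (T : finType) (g : sym_game R T) (w1 w2 : R) A1 A2 :
  cost2 g w1 w2 A1 A2 = \sum_r
    res_cost (alpha g r) (beta g r) w2 (r \in A2) (res_load w1 w2 (r \in A1) (r \in A2)).
Proof.
rewrite /cost2 /pcost mulr_sumr big_mkcond; apply: eq_bigr => r _.
by rewrite /res_cost /load /res_load; case: (r \in A2).
Qed.

(* The share of one resource in [N C(O) - D C(A)] minus the equilibrium
   inequalities [C1(A) <= C1(O1, A2)], [C1(A) <= C1(O2, A2)],
   [C2(A) <= C2(A1, O2)], [C2(A) <= C2(A1, O1)] weighted by [l1 .. l4]; the
   resource has coefficients [a], [b] and lies in [A1], [A2], [O1], [O2]
   according to [x1], [x2], [y1], [y2]. *)
Definition resource_slack (N D l1 l2 l3 l4 w1 w2 a b : R) (x1 x2 y1 y2 : bool) : R :=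
  let c := res_cost a b in
  let cA1 := c w1 x1 (res_load w1 w2 x1 x2) in
  let cA2 := c w2 x2 (res_load w1 w2 x1 x2) in
  N * (c w1 y1 (res_load w1 w2 y1 y2) + c w2 y2 (res_load w1 w2 y1 y2))
  - D * (cA1 + cA2)
  - l1 * (c w1 y1 (res_load w1 w2 y1 x2) - cA1)
  - l2 * (c w1 y2 (res_load w1 w2 y2 x2) - cA1)
  - l3 * (c w2 y2 (res_load w1 w2 x1 y2) - cA2)
  - l4 * (c w2 y1 (res_load w1 w2 x1 y1) - cA2).

Lemma poa_ub_of_slack (w1 w2 N D l1 l2 l3 l4 : R) :
  0 < D -> 0 <= l1 -> 0 <= l2 -> 0 <= l3 -> 0 <= l4 ->
  (forall a b x1 x2 y1 y2, 0 <= a -> 0 <= b ->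
     0 <= resource_slack N D l1 l2 l3 l4 w1 w2 a b x1 x2 y1 y2) ->
  poa_ub (@all_games R) w1 w2 (N / D).
Proof.
move=> D_gt0 l1_ge0 l2_ge0 l3_ge0 l4_ge0 slack_ge0 T g [alpha_ge0 [beta_ge0 _]].
move=> A1 A2 O1 O2 [_ [NE1 NE2]] [[O1_act O2_act] _] SO_gt0.
have total_slack :
  \sum_r resource_slack N D l1 l2 l3 l4 w1 w2 (alpha g r) (beta g r)
           (r \in A1) (r \in A2) (r \in O1) (r \in O2) =
  N * social_cost g w1 w2 O1 O2 - D * social_cost g w1 w2 A1 A2
  - l1 * (cost1 g w1 w2 O1 A2 - cost1 g w1 w2 A1 A2)
  - l2 * (cost1 g w1 w2 O2 A2 - cost1 g w1 w2 A1 A2)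
  - l3 * (cost2 g w1 w2 A1 O2 - cost2 g w1 w2 A1 A2)
  - l4 * (cost2 g w1 w2 A1 O1 - cost2 g w1 w2 A1 A2).
  rewrite /social_cost !cost1E !cost2E.
  by rewrite -!sumrB -!big_split !mulr_sumr -!sumrB.
have : 0 <= \sum_r resource_slack N D l1 l2 l3 l4 w1 w2 (alpha g r) (beta g r)
                    (r \in A1) (r \in A2) (r \in O1) (r \in O2).
  by apply: sumr_ge0 => r _; apply: slack_ge0.
have gain_ge0 (l c c' : R) : 0 <= l -> c <= c' -> 0 <= l * (c' - c).
  by move=> l_ge0 le_cc'; rewrite mulr_ge0 // subr_ge0.
have := gain_ge0 _ _ _ l1_ge0 (NE1 O1 O1_act).
have := gain_ge0 _ _ _ l2_ge0 (NE1 O2 O2_act).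
have := gain_ge0 _ _ _ l3_ge0 (NE2 O2 O2_act).
have := gain_ge0 _ _ _ l4_ge0 (NE2 O1 O1_act).
rewrite total_slack ler_pdivrMr // mulrAC ler_pdivlMr // => *.
lra.
Qed.

End PoABounds.

(** * The upper bound *)

Section UpperBounds.
Variable R : realType.

(* [y^3 q(x / y)] for [q x = x^3 - x^2 - 2 x - 1]; the quartic defining sigma
   is [(x + 1) q x]. *)
Definition sigma_cubic (x y : R) : R := x ^+ 3 - x ^+ 2 * y - 2 * x * y ^+ 2 - y ^+ 3.

Lemma sigma_cubic_root (s : R) :
  0 < s -> s ^+ 4 - 3 * s ^+ 2 - 3 * s - 1 = 0 -> sigma_cubic s 1 = 0.
Proof.
move=> s_gt0 s_root; apply/eqP.
have : (s + 1) * sigma_cubic s 1 == 0 by rewrite -s_root /sigma_cubic; apply/eqP; ring.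
by rewrite mulf_eq0 => /orP [/eqP|//]; lra.
Qed.

Lemma sigma_ge2 (s : R) : 0 < s -> sigma_cubic s 1 = 0 -> 2 <= s.
Proof.
move=> s_gt0 s_cubic; rewrite leNgt; apply/negP => s_lt2.
have : 0 < s * (2 - s) * (s + 1) by rewrite !mulr_gt0 //; lra.
have : sigma_cubic s 1 = - (s * (2 - s) * (s + 1)) - 1 by rewrite /sigma_cubic; ring.
lra.
Qed.

Lemma sigma_cubicE (s x y : R) : sigma_cubic s 1 = 0 ->
  sigma_cubic x y = (x - s * y) * (x * (x - y) + x * (s * y) + (s * y - 2 * y) * (s * y + y)).
Proof.
move=> s_cubic; rewrite -[RHS]addr0 -(mulr0 (y ^+ 3)) -s_cubic /sigma_cubic; ring.
Qed.

Lemma sigma_cofactor_ge0 (s x y : R) : 2 <= s -> 0 <= y -> y <= x ->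
  0 <= x * (x - y) + x * (s * y) + (s * y - 2 * y) * (s * y + y).
Proof.
move=> s_ge2 y_ge0 le_yx.
have x_ge0 : 0 <= x by lra.
have s_ge0 : 0 <= s by lra.
have xy_ge0 : 0 <= x - y by lra.
have sy_ge0 : 0 <= s * y - 2 * y by rewrite -mulrBl mulr_ge0 // subr_ge0.
nonneg.
Qed.

Lemma sigma_cubic_le0 (s w1 w2 : R) : sigma_cubic s 1 = 0 -> 2 <= s ->
  0 <= w2 -> w2 <= w1 -> w1 <= s * w2 -> sigma_cubic w1 w2 <= 0.
Proof.
move=> s_cubic s_ge2 w2_ge0 le_w21 le_w1s.
by rewrite (sigma_cubicE _ _ s_cubic) mulr_le0_ge0 ?subr_le0 ?sigma_cofactor_ge0.
Qed.

Lemma sigma_cubic_ge0 (s w1 w2 : R) : sigma_cubic s 1 = 0 -> 2 <= s ->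
  0 <= w2 -> s * w2 <= w1 -> 0 <= sigma_cubic w1 w2.
Proof.
move=> s_cubic s_ge2 w2_ge0 le_sw1; have le_w21 : w2 <= w1 by nra.
by rewrite (sigma_cubicE _ _ s_cubic) mulr_ge0 ?subr_ge0 ?sigma_cofactor_ge0.
Qed.

Definition num_a (x y : R) : R :=
  2 * x ^+ 4 + 6 * x ^+ 3 * y + 8 * x ^+ 2 * y ^+ 2 + 6 * x * y ^+ 3 + 2 * y ^+ 4.
Definition den_a (x y : R) : R :=
  2 * x ^+ 4 + 3 * x ^+ 3 * y + 4 * x ^+ 2 * y ^+ 2 + 4 * x * y ^+ 3 + 2 * y ^+ 4.
Definition dual_a1 (x y : R) : R := 2 * x ^+ 4 + 4 * x ^+ 3 * y + 3 * x ^+ 2 * y ^+ 2.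
Definition dual_a2 (x y : R) : R := 3 * x ^+ 2 * y ^+ 2 + 4 * x * y ^+ 3 + 2 * y ^+ 4.
Definition dual_a3 (x y : R) : R := x ^+ 4 + 2 * x ^+ 2 * y ^+ 2 + 4 * x * y ^+ 3 + 2 * y ^+ 4.
Definition dual_a4 (x y : R) : R := 3 * x ^+ 4 + 4 * x ^+ 3 * y + 2 * x ^+ 2 * y ^+ 2.

Definition num_b (x y : R) : R :=
  2 * x ^+ 4 + 4 * x ^+ 3 * y + 4 * x ^+ 2 * y ^+ 2 + 2 * x * y ^+ 3.
Definition den_b (x y : R) : R :=
  2 * x ^+ 4 + x ^+ 3 * y + 2 * x ^+ 2 * y ^+ 2 + 3 * x * y ^+ 3 + y ^+ 4.
Definition dual_b1 (x y : R) : R :=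
  2 * x ^+ 5 + 2 * x ^+ 4 * y + x ^+ 3 * y ^+ 2 - x * y ^+ 4 - y ^+ 5.
Definition dual_b2 (x y : R) : R :=
  x ^+ 3 * y ^+ 2 + 4 * x ^+ 2 * y ^+ 3 + 3 * x * y ^+ 4 + y ^+ 5.
Definition dual_b3 (x y : R) : R := x ^+ 5 + x ^+ 3 * y ^+ 2 + x ^+ 2 * y ^+ 3.
Definition dual_b4 (x y : R) : R :=
  x ^+ 5 + 2 * x ^+ 4 * y + 5 * x ^+ 3 * y ^+ 2 + 5 * x ^+ 2 * y ^+ 3 + 2 * x * y ^+ 4.

Lemma lincomb_ge0 (ca cb : R) (f : R -> R -> R) :
  0 <= ca -> 0 <= cb -> (forall a b, f a b = ca * a + cb * b) ->
  forall a b, 0 <= a -> 0 <= b -> 0 <= f a b.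
Proof. by move=> ca_ge0 cb_ge0 fE a b a_ge0 b_ge0; rewrite fE addr_ge0 ?mulr_ge0. Qed.

(* The slack is linear in [(a, b)]: [lincomb ca cb] checks that it equals
   [ca * a + cb * b] with [ca], [cb] manifestly nonnegative.  The certificates
   below run over [(x1, x2, y1, y2)] in lexicographic order, [true] first. *)
Tactic Notation "lincomb" uconstr(ca) uconstr(cb) :=
  apply (@lincomb_ge0 ca cb); [nonneg | nonneg | move=> ? ? /=; rewrite /sigma_cubic; ring].

Lemma resource_slack_a_ge0 (w1 u w2 a b : R) x1 x2 y1 y2 :
  w1 = w2 + u -> 0 <= u -> 0 <= w2 -> sigma_cubic w1 w2 <= 0 -> 0 <= a -> 0 <= b ->
  0 <= resource_slack (num_a w1 w2) (den_a w1 w2) (dual_a1 w1 w2) (dual_a2 w1 w2)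
                      (dual_a3 w1 w2) (dual_a4 w1 w2) w1 w2 a b x1 x2 y1 y2.
Proof.
move=> -> u_ge0 w2_ge0; rewrite -oppr_ge0 => cubic_ge0.
rewrite /resource_slack /num_a /den_a /dual_a1 /dual_a2 /dual_a3 /dual_a4.
move: a b; case: x1; case: x2; case: y1; case: y2; rewrite /res_cost /res_load /=.
- lincomb (3*u^+4*w2 + 19*u^+3*w2^+2 + 45*u^+2*w2^+3 + 47*u*w2^+4 + 18*w2^+5)
          (3*u^+5*w2 + 25*u^+4*w2^+2 + 83*u^+3*w2^+3 + 137*u^+2*w2^+4 + 112*u*w2^+5
           + 36*w2^+6).
- lincomb (2*u^+4*w2 + 12*u^+3*w2^+2 + 28*u^+2*w2^+3 + 30*u*w2^+4 + 12*w2^+5)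
          0.
- lincomb (4*u^+4*w2 + 22*u^+3*w2^+2 + 44*u^+2*w2^+3 + 38*u*w2^+4 + 12*w2^+5)
          (2*u^+5*w2 + 14*u^+4*w2^+2 + 36*u^+3*w2^+3 + 40*u^+2*w2^+4 + 16*u*w2^+5).
- lincomb (3*u^+4*w2 + 15*u^+3*w2^+2 + 27*u^+2*w2^+3 + 21*u*w2^+4 + 6*w2^+5)
          (3*u^+5*w2 + 21*u^+4*w2^+2 + 57*u^+3*w2^+3 + 75*u^+2*w2^+4 + 48*u*w2^+5 + 12*w2^+6).
- lincomb (u^+4*w2 + 10*u^+3*w2^+2 + 30*u^+2*w2^+3 + 36*u*w2^+4 + 15*w2^+5)
          (3*u^+5*w2 + 25*u^+4*w2^+2 + 86*u^+3*w2^+3 + 150*u^+2*w2^+4 + 131*u*w2^+5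
           + 45*w2^+6).
- lincomb (3*u^+3*w2^+2 + 13*u^+2*w2^+3 + 19*u*w2^+4 + 9*w2^+5)
          0.
- lincomb (2*u^+4*w2 + 13*u^+3*w2^+2 + 29*u^+2*w2^+3 + 27*u*w2^+4 + 9*w2^+5)
          0.
- lincomb (u^+4*w2 + 6*u^+3*w2^+2 + 12*u^+2*w2^+3 + 10*u*w2^+4 + 3*w2^+5)
          (u^+5*w2 + 7*u^+4*w2^+2 + 18*u^+3*w2^+3 + 22*u^+2*w2^+4 + 13*u*w2^+5 + 3*w2^+6).
- lincomb (2*u^+4*w2 + 13*u^+3*w2^+2 + 33*u^+2*w2^+3 + 37*u*w2^+4 + 15*w2^+5)
          (4*u^+5*w2 + 30*u^+4*w2^+2 + 95*u^+3*w2^+3 + 157*u^+2*w2^+4 + 133*u*w2^+5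
           + 45*w2^+6).
- lincomb (u^+4*w2 + 6*u^+3*w2^+2 + 16*u^+2*w2^+3 + 20*u*w2^+4 + 9*w2^+5)
          0.
- lincomb (3*u^+4*w2 + 16*u^+3*w2^+2 + 32*u^+2*w2^+3 + 28*u*w2^+4 + 9*w2^+5)
          0.
- lincomb (2*u^+4*w2 + 9*u^+3*w2^+2 + 15*u^+2*w2^+3 + 11*u*w2^+4 + 3*w2^+5)
          (2*u^+4*w2^+2 + 9*u^+3*w2^+3 + 15*u^+2*w2^+4 + 11*u*w2^+5 + 3*w2^+6).
- lincomb (4*u^+3*w2^+2 + 18*u^+2*w2^+3 + 26*u*w2^+4 + 12*w2^+5)
          (6*u^+5*w2 + 42*u^+4*w2^+2 + 128*u^+3*w2^+3 + 208*u^+2*w2^+4 + 176*u*w2^+5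
           + 60*w2^+6).
- lincomb ((w2+u)*w2*(- sigma_cubic (w2+u) w2 + 2*(w2+u)*w2^+2 + w2^+3))
          (2*u^+5*w2 + 12*u^+4*w2^+2 + 30*u^+3*w2^+3 + 38*u^+2*w2^+4 + 24*u*w2^+5 + 6*w2^+6).
- lincomb (u^+4*w2 + 7*u^+3*w2^+2 + 17*u^+2*w2^+3 + 17*u*w2^+4 + 6*w2^+5)
          (2*(w2+u)*w2^+2*(- sigma_cubic (w2+u) w2)).
- by lincomb 0 0.
Qed.

Lemma resource_slack_b_ge0 (w1 u w2 a b : R) x1 x2 y1 y2 :
  w1 = 2 * w2 + u -> 0 <= u -> 0 <= w2 -> 0 <= sigma_cubic w1 w2 -> 0 <= a -> 0 <= b ->
  0 <= resource_slack (w1 * num_b w1 w2) (w1 * den_b w1 w2) (dual_b1 w1 w2) (dual_b2 w1 w2)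
                      (dual_b3 w1 w2) (dual_b4 w1 w2) w1 w2 a b x1 x2 y1 y2.
Proof.
move=> -> u_ge0 w2_ge0 cubic_ge0.
rewrite /resource_slack /num_b /den_b /dual_b1 /dual_b2 /dual_b3 /dual_b4.
move: a b; case: x1; case: x2; case: y1; case: y2; rewrite /res_cost /res_load /=.
- lincomb (3*u^+5*w2 + 35*u^+4*w2^+2 + 161*u^+3*w2^+3 + 364*u^+2*w2^+4 + 403*u*w2^+5
           + 174*w2^+6)
          (3*u^+6*w2 + 44*u^+5*w2^+2 + 266*u^+4*w2^+3 + 847*u^+3*w2^+4 + 1495*u^+2*w2^+5
           + 1383*u*w2^+6 + 522*w2^+7).
- lincomb (2*u^+5*w2 + 22*u^+4*w2^+2 + 98*u^+3*w2^+3 + 220*u^+2*w2^+4 + 248*u*w2^+5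
           + 112*w2^+6)
          0.
- lincomb (2*u^+5*w2 + 24*u^+4*w2^+2 + 116*u^+3*w2^+3 + 282*u^+2*w2^+4 + 344*u*w2^+5
           + 168*w2^+6)
          (2*u^+5*w2^+2 + 24*u^+4*w2^+3 + 116*u^+3*w2^+4 + 282*u^+2*w2^+5 + 344*u*w2^+6
           + 168*w2^+7).
- lincomb (u^+5*w2 + 11*u^+4*w2^+2 + 53*u^+3*w2^+3 + 138*u^+2*w2^+4 + 189*u*w2^+5 + 106*w2^+6)
          (u^+6*w2 + 14*u^+5*w2^+2 + 86*u^+4*w2^+3 + 297*u^+3*w2^+4 + 603*u^+2*w2^+5
           + 673*u*w2^+6 + 318*w2^+7).
- lincomb (3*u^+5*w2 + 34*u^+4*w2^+2 + 149*u^+3*w2^+3 + 313*u^+2*w2^+4 + 310*u*w2^+5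
           + 112*w2^+6)
          (5*u^+6*w2 + 68*u^+5*w2^+2 + 383*u^+4*w2^+3 + 1139*u^+3*w2^+4
           + 1876*u^+2*w2^+5 + 1610*u*w2^+6 + 556*w2^+7).
- lincomb (2*u^+5*w2 + 21*u^+4*w2^+2 + 86*u^+3*w2^+3 + 169*u^+2*w2^+4 + 155*u*w2^+5 + 50*w2^+6)
          (2*(2*w2+u)*w2*((2*w2+u)^+2 + (2*w2+u)*w2 + w2^+2)*sigma_cubic (2*w2+u) w2).
- lincomb (2*u^+5*w2 + 23*u^+4*w2^+2 + 104*u^+3*w2^+3 + 231*u^+2*w2^+4 + 251*u*w2^+5
           + 106*w2^+6)
          0.
- lincomb (u^+5*w2 + 10*u^+4*w2^+2 + 41*u^+3*w2^+3 + 87*u^+2*w2^+4 + 96*u*w2^+5 + 44*w2^+6)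
          (u^+6*w2 + 12*u^+5*w2^+2 + 61*u^+4*w2^+3 + 169*u^+3*w2^+4 + 270*u^+2*w2^+5
           + 236*u*w2^+6 + 88*w2^+7).
- lincomb (2*u^+5*w2 + 25*u^+4*w2^+2 + 120*u^+3*w2^+3 + 277*u^+2*w2^+4 + 307*u*w2^+5
           + 130*w2^+6)
          (4*u^+6*w2 + 56*u^+5*w2^+2 + 327*u^+4*w2^+3 + 1016*u^+3*w2^+4
           + 1765*u^+2*w2^+5 + 1619*u*w2^+6 + 610*w2^+7).
- lincomb (u^+5*w2 + 12*u^+4*w2^+2 + 57*u^+3*w2^+3 + 133*u^+2*w2^+4 + 152*u*w2^+5 + 68*w2^+6)
          0.
- lincomb (u^+5*w2 + 14*u^+4*w2^+2 + 75*u^+3*w2^+3 + 195*u^+2*w2^+4 + 248*u*w2^+5 + 124*w2^+6)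
          0.
- lincomb (u^+4*w2^+2 + 12*u^+3*w2^+3 + 51*u^+2*w2^+4 + 93*u*w2^+5 + 62*w2^+6)
          (u^+4*w2^+3 + 12*u^+3*w2^+4 + 51*u^+2*w2^+5 + 93*u*w2^+6 + 62*w2^+7).
- lincomb (2*u^+5*w2 + 24*u^+4*w2^+2 + 108*u^+3*w2^+3 + 226*u^+2*w2^+4 + 214*u*w2^+5
           + 68*w2^+6)
          (6*u^+6*w2 + 82*u^+5*w2^+2 + 468*u^+4*w2^+3 + 1424*u^+3*w2^+4
           + 2428*u^+2*w2^+5 + 2190*u*w2^+6 + 812*w2^+7).
- lincomb (u^+5*w2 + 11*u^+4*w2^+2 + 45*u^+3*w2^+3 + 82*u^+2*w2^+4 + 59*u*w2^+5 + 6*w2^+6)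
          (2*u^+6*w2 + 26*u^+5*w2^+2 + 140*u^+4*w2^+3 + 396*u^+3*w2^+4 + 612*u^+2*w2^+5
           + 478*u*w2^+6 + 140*w2^+7).
- lincomb (u^+5*w2 + 13*u^+4*w2^+2 + 63*u^+3*w2^+3 + 144*u^+2*w2^+4 + 155*u*w2^+5 + 62*w2^+6)
          0.
- by lincomb 0 0.
Qed.

Lemma den_a_gt0 (w1 w2 : R) : 0 <= w2 -> 0 < w1 -> 0 < den_a w1 w2.
Proof.
move=> w2_ge0 w1_gt0; have := exprn_gt0 4 w1_gt0; have w1_ge0 := ltW w1_gt0.
have : 0 <= 3 * w1 ^+ 3 * w2 + 4 * w1 ^+ 2 * w2 ^+ 2 + 4 * w1 * w2 ^+ 3 + 2 * w2 ^+ 4.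
  by nonneg.
rewrite /den_a; lra.
Qed.

Lemma den_b_gt0 (w1 w2 : R) : 0 <= w2 -> 0 < w1 -> 0 < den_b w1 w2.
Proof.
move=> w2_ge0 w1_gt0; have := exprn_gt0 4 w1_gt0; have w1_ge0 := ltW w1_gt0.
have : 0 <= w1 ^+ 3 * w2 + 2 * w1 ^+ 2 * w2 ^+ 2 + 3 * w1 * w2 ^+ 3 + w2 ^+ 4 by nonneg.
rewrite /den_b; lra.
Qed.

Lemma poa_ub_a (w1 w2 : R) : 0 <= w2 -> w2 <= w1 -> 0 < w1 -> sigma_cubic w1 w2 <= 0 ->
  poa_ub (@all_games R) w1 w2 (num_a w1 w2 / den_a w1 w2).
Proof.
move=> w2_ge0 le_w21 w1_gt0 cubic_le0; have w1_ge0 := ltW w1_gt0.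
apply: (poa_ub_of_slack (l1 := dual_a1 w1 w2) (l2 := dual_a2 w1 w2)
                         (l3 := dual_a3 w1 w2) (l4 := dual_a4 w1 w2)) => [||||| a b x1 x2 y1 y2].
- exact: den_a_gt0.
- by rewrite /dual_a1; nonneg.
- by rewrite /dual_a2; nonneg.
- by rewrite /dual_a3; nonneg.
- by rewrite /dual_a4; nonneg.
- by apply: (resource_slack_a_ge0 (u := w1 - w2)) => //; [ring | lra].
Qed.

Lemma dual_b1_ge0 (w1 w2 : R) : 0 <= w2 -> 2 * w2 <= w1 -> 0 <= dual_b1 w1 w2.
Proof.
move=> w2_ge0 le_w21; have u_ge0 : 0 <= w1 - 2 * w2 by lra.
move: u_ge0; set u := w1 - 2 * w2 => u_ge0.
have -> : dual_b1 w1 w2 = 2 * u ^+ 5 + 22 * u ^+ 4 * w2 + 97 * u ^+ 3 * w2 ^+ 2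
    + 214 * u ^+ 2 * w2 ^+ 3 + 235 * u * w2 ^+ 4 + 101 * w2 ^+ 5.
  by rewrite /u /dual_b1; ring.
by nonneg.
Qed.

Lemma poa_ub_b (w1 w2 : R) : 0 <= w2 -> 2 * w2 <= w1 -> 0 < w1 -> 0 <= sigma_cubic w1 w2 ->
  poa_ub (@all_games R) w1 w2 (num_b w1 w2 / den_b w1 w2).
Proof.
move=> w2_ge0 le_w21 w1_gt0 cubic_ge0; have w1_ge0 := ltW w1_gt0.
have w1_neq0 : w1 != 0 by rewrite gt_eqF.
rewrite -[_ / den_b _ _]mul1r -(divff w1_neq0) mulf_div.
apply: (poa_ub_of_slack (l1 := dual_b1 w1 w2) (l2 := dual_b2 w1 w2)
                         (l3 := dual_b3 w1 w2) (l4 := dual_b4 w1 w2)) => [||||| a b x1 x2 y1 y2].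
- by rewrite mulr_gt0 ?den_b_gt0.
- exact: dual_b1_ge0.
- by rewrite /dual_b2; nonneg.
- by rewrite /dual_b3; nonneg.
- by rewrite /dual_b4; nonneg.
- by apply: (resource_slack_b_ge0 (u := w1 - 2 * w2)) => //; [ring | lra].
Qed.

End UpperBounds.

(** * The lower-bound networks *)

Fixpoint seqs_upto (T : Type) (l : seq T) (n : nat) : seq (seq T) :=
  if n is n'.+1 then [::] :: [seq e :: p | e <- l, p <- seqs_upto l n'] else [:: [::]].

Lemma mem_seqs_upto (T : eqType) (l : seq T) (n : nat) (p : seq T) :
  {subset p <= l} -> (size p <= n)%N -> p \in seqs_upto l n.
Proof.
elim: n p => [|n IHn] [|e p] //= p_l size_p; rewrite in_cons; apply/orP; right.
apply/allpairsP; exists (e, p); rewrite p_l ?mem_head // IHn //.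
by move=> x x_p; rewrite p_l // in_cons x_p orbT.
Qed.

Lemma st_path_size (T V : finType) (tl hd : T -> V) (s t : V) (p : seq T) :
  st_path tl hd s t p -> (size p < #|V|)%N.
Proof.
case/and3P=> _ _ /card_uniqP /= card_p.
by rewrite -(size_map hd) -card_p max_card.
Qed.

Lemma st_paths_in (T V : finType) (tl hd : T -> V) (s t : V) (l : seq T) (n : nat)
    (L : seq (seq T)) :
  (forall e, e \in l) -> (#|V| <= n.+1)%N ->
  all (fun p => st_path tl hd s t p ==> (p \in L)) (seqs_upto l n) ->
  forall p, st_path tl hd s t p -> p \in L.
Proof.
move=> l_all V_le /allP L_all p p_path; apply: (implyP (L_all p _)) => //.
apply: mem_seqs_upto => [e _ | ]; first exact: l_all.
by rewrite -ltnS (leq_trans (st_path_size p_path)).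
Qed.

(* [enum 'I_n] and membership of concrete ordinals do not reduce by
   computation, so the instances below are evaluated over explicit lists of
   ordinals, with an [eqn]-based membership test. *)
Lemma sum_ordE (V : nmodType) (n : nat) (l : seq 'I_n) (F : 'I_n -> V) :
  map val l = iota 0 n -> \sum_i F i = \sum_(i <- l) F i.
Proof.
move=> l_val; have -> : l = enum 'I_n by apply: (inj_map val_inj); rewrite val_enum_ord.
by rewrite big_enum.
Qed.

Lemma mem_ord_seq (n : nat) (l : seq 'I_n) : map val l = iota 0 n -> forall i, i \in l.
Proof. by move=> l_val i; rewrite -(mem_map val_inj) l_val mem_iota ltn_ord. Qed.

Definition mem_ord (n : nat) (i : 'I_n) (p : seq 'I_n) : bool := has (fun e : 'I_n => eqn i e) p.

Lemma in_set_ordE (n : nat) (i : 'I_n) (p : seq 'I_n) : (i \in [set e in p]) = mem_ord i p.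
Proof. by rewrite inE /mem_ord; elim: p => //= e p IHp; rewrite in_cons IHp. Qed.

Lemma eq_ge0 (R : numDomainType) (P x : R) : 0 <= P -> x = P -> 0 <= x.
Proof. by move=> P_ge0 ->. Qed.

Lemma eq_gt0 (R : numDomainType) (P Q x : R) : 0 < P -> 0 <= Q -> x = P + Q -> 0 < x.
Proof. by move=> P_gt0 Q_ge0 ->; rewrite ltr_wpDr. Qed.

(* [poly_ge0 P] proves [0 <= x] from the identity [x = P], and [gap P] proves
   [x <= y] from [y - x = P], for [P] manifestly nonnegative. *)
Tactic Notation "poly_ge0" uconstr(P) := apply (@eq_ge0 _ P); [nonneg | ring].
Tactic Notation "gap" uconstr(P) := rewrite -subr_ge0; poly_ge0 P.

Section NetworkInstances.
Variable R : realType.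

Definition net_game (T V : finType) (tl hd : T -> V) (s t : V) (b : T -> R) : sym_game R T :=
  SymGame (fun _ => 0) b (fun A => exists p, st_path tl hd s t p /\ A = [set e in p]).

Lemma net_game_attained (T V : finType) (tl hd : T -> V) (s t : V) (b : T -> R)
    (L : seq (seq T)) (p1 p2 q1 q2 : seq T) (w1 w2 : R) :
  (forall e, 0 <= b e) ->
  (forall p, st_path tl hd s t p -> p \in L) ->
  all (st_path tl hd s t) [:: p1; p2; q1; q2] ->
  let g := net_game tl hd s t b in
  (forall q, q \in L ->
     cost1 g w1 w2 [set e in p1] [set e in p2] <= cost1 g w1 w2 [set e in q] [set e in p2]) ->
  (forall q, q \in L ->
     cost2 g w1 w2 [set e in p1] [set e in p2] <= cost2 g w1 w2 [set e in p1] [set e in q]) ->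
  (forall r1 r2, r1 \in L -> r2 \in L ->
     social_cost g w1 w2 [set e in q1] [set e in q2] <=
     social_cost g w1 w2 [set e in r1] [set e in r2]) ->
  0 < social_cost g w1 w2 [set e in q1] [set e in q2] ->
  poa_attained (@network_games R) w1 w2
    (social_cost g w1 w2 [set e in p1] [set e in p2] /
     social_cost g w1 w2 [set e in q1] [set e in q2]).
Proof.
move=> b_ge0 L_paths /and5P [p1_path p2_path q1_path q2_path _] g NE1 NE2 opt opt_gt0.
have path_act p : st_path tl hd s t p -> acts g [set e in p] by exists p.
exists T, g, [set e in p1], [set e in p2], [set e in q1], [set e in q2]; split=> //.
- split; last by exists V, tl, hd, s, t.
  by split=> //; split=> //; exists [set e in p1]; apply: path_act.
- split; first by split; apply: path_act.
  by split=> B [p [p_path ->]]; [apply: NE1 | apply: NE2]; apply: L_paths.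
- split; first by split; apply: path_act.
  by move=> B1 B2 [[r1 [r1_path ->]] [r2 [r2_path ->]]]; apply: opt; apply: L_paths.
Qed.

End NetworkInstances.

Ltac eval_costs ords :=
  rewrite /social_cost ?cost1E ?cost2E !(sum_ordE _ ords) !big_cons !big_nil !in_set_ordE /=;
  rewrite /res_cost /res_load /=.

Notation ord7 i := (@Ordinal 7 i isT).
Notation ord5 i := (@Ordinal 5 i isT).
Notation ord4 i := (@Ordinal 4 i isT).

Definition ords7 : seq 'I_7 := [:: ord7 0; ord7 1; ord7 2; ord7 3; ord7 4; ord7 5; ord7 6].
Lemma ords7_val : map val ords7 = iota 0 7. Proof. by []. Qed.

Definition ords5 : seq 'I_5 := [:: ord5 0; ord5 1; ord5 2; ord5 3; ord5 4].
Lemma ords5_val : map val ords5 = iota 0 5. Proof. by []. Qed.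

Definition arcs_a : seq ('I_5 * 'I_5) :=
  [:: (ord5 2, ord5 1); (ord5 0, ord5 3); (ord5 0, ord5 2); (ord5 4, ord5 1);
      (ord5 3, ord5 4); (ord5 4, ord5 2); (ord5 2, ord5 3)].
Definition tail_a (e : 'I_7) : 'I_5 := (nth (ord5 0, ord5 0) arcs_a e).1.
Definition head_a (e : 'I_7) : 'I_5 := (nth (ord5 0, ord5 0) arcs_a e).2.
Definition ne1_a : seq 'I_7 := [:: ord7 2; ord7 6; ord7 4; ord7 3].
Definition ne2_a : seq 'I_7 := [:: ord7 1; ord7 4; ord7 5; ord7 0].
Definition opt1_a : seq 'I_7 := [:: ord7 1; ord7 4; ord7 3].
Definition opt2_a : seq 'I_7 := [:: ord7 2; ord7 0].
Definition paths_a : seq (seq 'I_7) := [:: opt1_a; ne2_a; opt2_a; ne1_a].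

Lemma st_paths_a : forall p, st_path tail_a head_a (ord5 0) (ord5 1) p -> p \in paths_a.
Proof.
apply: (st_paths_in (l := ords7) (n := 4)); first exact: mem_ord_seq ords7_val.
  by rewrite card_ord.
by vm_compute.
Qed.

Definition arcs_b : seq ('I_4 * 'I_4) :=
  [:: (ord4 0, ord4 2); (ord4 3, ord4 1); (ord4 2, ord4 1); (ord4 0, ord4 3); (ord4 3, ord4 2)].
Definition tail_b (e : 'I_5) : 'I_4 := (nth (ord4 0, ord4 0) arcs_b e).1.
Definition head_b (e : 'I_5) : 'I_4 := (nth (ord4 0, ord4 0) arcs_b e).2.
Definition ne1_b : seq 'I_5 := [:: ord5 3; ord5 4; ord5 2].
Definition ne2_b : seq 'I_5 := [:: ord5 3; ord5 1].
Definition opt2_b : seq 'I_5 := [:: ord5 0; ord5 2].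
Definition paths_b : seq (seq 'I_5) := [:: opt2_b; ne2_b; ne1_b].

Lemma st_paths_b : forall p, st_path tail_b head_b (ord4 0) (ord4 1) p -> p \in paths_b.
Proof.
apply: (st_paths_in (l := ords5) (n := 3)); first exact: mem_ord_seq ords5_val.
  by rewrite card_ord.
by vm_compute.
Qed.

Section InstanceA.
Variable R : realType.

Definition beta_a (w1 w2 : R) (e : 'I_7) : R :=
  nth 0 [:: (w1 + w2) ^+ 2; w1 * (w1 + w2); (w1 + w2) ^+ 2; w2 * (w1 + w2);
            w1 ^+ 2 + w1 * w2 + w2 ^+ 2; 0; 0] e.
Arguments beta_a w1 w2 e /.

Variables (u w2 : R).
Hypotheses (u_ge0 : 0 <= u) (w2_ge0 : 0 <= w2).
Local Notation w1 := (w2 + u).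
Local Notation g := (net_game tail_a head_a (ord5 0) (ord5 1) (beta_a w1 w2)).
Local Notation C := (social_cost g w1 w2).

Lemma beta_a_ge0 e : 0 <= beta_a w1 w2 e.
Proof.
by rewrite /beta_a; case: (nat_of_ord e) => [|[|[|[|[|[|[|?]]]]]]] /=; rewrite ?nth_nil; nonneg.
Qed.

Lemma ne_a_player1 q : q \in paths_a ->
  cost1 g w1 w2 [set e in ne1_a] [set e in ne2_a] <= cost1 g w1 w2 [set e in q] [set e in ne2_a].
Proof.
rewrite !inE => /or4P [] /eqP ->; eval_costs ords7_val.
- by gap 0.
- by gap (u^+4 + 6*u^+3*w2 + 14*u^+2*w2^+2 + 15*u*w2^+3 + 6*w2^+4).
- by gap 0.
- by gap 0.
Qed.

Lemma ne_a_player2 q : q \in paths_a ->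
  cost2 g w1 w2 [set e in ne1_a] [set e in ne2_a] <= cost2 g w1 w2 [set e in ne1_a] [set e in q].
Proof.
rewrite !inE => /or4P [] /eqP ->; eval_costs ords7_val.
- by gap 0.
- by gap 0.
- by gap 0.
- by gap (u^+3*w2 + 5*u^+2*w2^+2 + 9*u*w2^+3 + 6*w2^+4).
Qed.

Lemma opt_a_min r1 r2 : r1 \in paths_a -> r2 \in paths_a ->
  C [set e in opt1_a] [set e in opt2_a] <= C [set e in r1] [set e in r2].
Proof.
rewrite !inE => /or4P [] /eqP -> /or4P [] /eqP ->; eval_costs ords7_val.
- by gap (4*u^+3*w2 + 18*u^+2*w2^+2 + 27*u*w2^+3 + 13*w2^+4).
- by gap (4*u^+3*w2 + 17*u^+2*w2^+2 + 24*u*w2^+3 + 11*w2^+4).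
- by gap 0.
- by gap (2*u^+3*w2 + 10*u^+2*w2^+2 + 18*u*w2^+3 + 11*w2^+4).
- by gap (u^+4 + 9*u^+3*w2 + 25*u^+2*w2^+2 + 28*u*w2^+3 + 11*w2^+4).
- by gap (u^+4 + 11*u^+3*w2 + 36*u^+2*w2^+2 + 47*u*w2^+3 + 21*w2^+4).
- by gap (u^+4 + 7*u^+3*w2 + 19*u^+2*w2^+2 + 23*u*w2^+3 + 10*w2^+4).
- by gap (u^+4 + 7*u^+3*w2 + 17*u^+2*w2^+2 + 19*u*w2^+3 + 9*w2^+4).
- by gap (u^+3*w2 + 3*u^+2*w2^+2 + 2*u*w2^+3).
- by gap (3*u^+3*w2 + 14*u^+2*w2^+2 + 21*u*w2^+3 + 10*w2^+4).
- by gap (5*u^+3*w2 + 23*u^+2*w2^+2 + 35*u*w2^+3 + 17*w2^+4).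
- by gap (3*u^+3*w2 + 13*u^+2*w2^+2 + 19*u*w2^+3 + 10*w2^+4).
- by gap (3*u^+3*w2 + 14*u^+2*w2^+2 + 22*u*w2^+3 + 11*w2^+4).
- by gap (3*u^+3*w2 + 13*u^+2*w2^+2 + 19*u*w2^+3 + 9*w2^+4).
- by gap (3*u^+3*w2 + 14*u^+2*w2^+2 + 21*u*w2^+3 + 10*w2^+4).
- by gap (5*u^+3*w2 + 24*u^+2*w2^+2 + 39*u*w2^+3 + 21*w2^+4).
Qed.

Lemma opt_a_gt0 : 0 < w1 -> 0 < C [set e in opt1_a] [set e in opt2_a].
Proof.
move=> w1_gt0; eval_costs ords7_val.
apply: (@eq_gt0 _ (2 * w1 ^+ 4) (3*u^+3*w2 + 13*u^+2*w2^+2 + 21*u*w2^+3 + 13*w2^+4)).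
- by rewrite mulr_gt0 ?exprn_gt0.
- by nonneg.
- ring.
Qed.

Lemma ratio_a : 0 < w1 ->
  C [set e in ne1_a] [set e in ne2_a] / C [set e in opt1_a] [set e in opt2_a] =
  num_a w1 w2 / den_a w1 w2.
Proof.
move=> w1_gt0.
have opt_neq0 : C [set e in opt1_a] [set e in opt2_a] != 0 by rewrite gt_eqF ?opt_a_gt0.
have den_neq0 : den_a w1 w2 != 0 by rewrite gt_eqF ?den_a_gt0.
apply/eqP; rewrite eqr_div //; apply/eqP.
by eval_costs ords7_val; rewrite /num_a /den_a; ring.
Qed.

End InstanceA.

Section InstanceB.
Variable R : realType.

Definition beta_b (w1 w2 : R) (e : 'I_5) : R :=
  nth 0 [:: (w1 ^+ 2 + w1 * w2 + w2 ^+ 2) * (w1 + w2); w1 * (w1 ^+ 2 - w2 ^+ 2);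
            (w1 ^+ 2 - w2 ^+ 2) * (w1 + w2); w1 * (w1 ^+ 2 + w1 * w2 + w2 ^+ 2); 0] e.
Arguments beta_b w1 w2 e /.

Variables (u w2 : R).
Hypotheses (u_ge0 : 0 <= u) (w2_ge0 : 0 <= w2).
Local Notation w1 := (2 * w2 + u).
Local Notation g := (net_game tail_b head_b (ord4 0) (ord4 1) (beta_b w1 w2)).
Local Notation C := (social_cost g w1 w2).

Lemma beta_b_ge0 e : 0 <= beta_b w1 w2 e.
Proof.
rewrite /beta_b; case: (nat_of_ord e) => [|[|[|[|[|?]]]]] /=; rewrite ?nth_nil //.
- by poly_ge0 (u^+3 + 8*u^+2*w2 + 22*u*w2^+2 + 21*w2^+3).
- by poly_ge0 (u^+3 + 6*u^+2*w2 + 11*u*w2^+2 + 6*w2^+3).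
- by poly_ge0 (u^+3 + 7*u^+2*w2 + 15*u*w2^+2 + 9*w2^+3).
- by poly_ge0 (u^+3 + 7*u^+2*w2 + 17*u*w2^+2 + 14*w2^+3).
Qed.

Lemma ne_b_player1 q : q \in paths_b ->
  cost1 g w1 w2 [set e in ne1_b] [set e in ne2_b] <= cost1 g w1 w2 [set e in q] [set e in ne2_b].
Proof.
rewrite !inE => /or3P [] /eqP ->; eval_costs ords5_val.
- by gap 0.
- by gap 0.
- by gap 0.
Qed.

Lemma ne_b_player2 q : q \in paths_b ->
  cost2 g w1 w2 [set e in ne1_b] [set e in ne2_b] <= cost2 g w1 w2 [set e in ne1_b] [set e in q].
Proof.
rewrite !inE => /or3P [] /eqP ->; eval_costs ords5_val.
- by gap 0.
- by gap 0.
- by gap (u^+4*w2 + 9*u^+3*w2^+2 + 30*u^+2*w2^+3 + 43*u*w2^+4 + 21*w2^+5).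
Qed.

Lemma opt_b_min r1 r2 : r1 \in paths_b -> r2 \in paths_b ->
  C [set e in ne2_b] [set e in opt2_b] <= C [set e in r1] [set e in r2].
Proof.
rewrite !inE => /or3P [] /eqP -> /or3P [] /eqP ->; eval_costs ords5_val.
- by gap (6*u^+4*w2 + 55*u^+3*w2^+2 + 188*u^+2*w2^+3 + 284*u*w2^+4 + 160*w2^+5).
- by gap (2*u^+4*w2 + 17*u^+3*w2^+2 + 52*u^+2*w2^+3 + 67*u*w2^+4 + 30*w2^+5).
- by gap (4*u^+4*w2 + 35*u^+3*w2^+2 + 111*u^+2*w2^+3 + 149*u*w2^+4 + 69*w2^+5).
- by gap 0.
- by gap (4*u^+4*w2 + 34*u^+3*w2^+2 + 106*u^+2*w2^+3 + 143*u*w2^+4 + 70*w2^+5).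
- by gap (2*u^+4*w2 + 18*u^+3*w2^+2 + 61*u^+2*w2^+3 + 91*u*w2^+4 + 49*w2^+5).
- by gap (3*u^+4*w2 + 26*u^+3*w2^+2 + 81*u^+2*w2^+3 + 106*u*w2^+4 + 48*w2^+5).
- by gap (3*u^+4*w2 + 26*u^+3*w2^+2 + 83*u^+2*w2^+3 + 115*u*w2^+4 + 58*w2^+5).
- by gap (5*u^+4*w2 + 44*u^+3*w2^+2 + 142*u^+2*w2^+3 + 197*u*w2^+4 + 97*w2^+5).
Qed.

Lemma opt_b_gt0 : 0 < w1 -> 0 < C [set e in ne2_b] [set e in opt2_b].
Proof.
move=> w1_gt0; eval_costs ords5_val.
apply: (@eq_gt0 _ (w1 ^+ 5)
  (u^+5 + 11*u^+4*w2 + 50*u^+3*w2^+2 + 119*u^+2*w2^+3 + 149*u*w2^+4 + 78*w2^+5)).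
- by rewrite exprn_gt0.
- by nonneg.
- ring.
Qed.

Lemma ratio_b : 0 < w1 ->
  C [set e in ne1_b] [set e in ne2_b] / C [set e in ne2_b] [set e in opt2_b] =
  num_b w1 w2 / den_b w1 w2.
Proof.
move=> w1_gt0.
have opt_neq0 : C [set e in ne2_b] [set e in opt2_b] != 0 by rewrite gt_eqF ?opt_b_gt0.
have den_neq0 : den_b w1 w2 != 0 by rewrite gt_eqF ?den_b_gt0.
apply/eqP; rewrite eqr_div //; apply/eqP.
by eval_costs ords5_val; rewrite /num_b /den_b; ring.
Qed.

End InstanceB.

Section Attained.
Variable R : realType.

Lemma poa_attained_a (w1 w2 : R) : 0 <= w2 -> w2 <= w1 -> 0 < w1 ->
  poa_attained (@network_games R) w1 w2 (num_a w1 w2 / den_a w1 w2).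
Proof.
move=> w2_ge0 le_w21 w1_gt0.
have [u u_ge0 w1E] : exists2 u, 0 <= u & w1 = w2 + u by exists (w1 - w2); [lra | ring].
rewrite w1E in w1_gt0 *; rewrite -ratio_a //.
apply: (net_game_attained (L := paths_a)).
- exact: beta_a_ge0.
- exact: st_paths_a.
- by vm_compute.
- exact: ne_a_player1.
- exact: ne_a_player2.
- exact: opt_a_min.
- exact: opt_a_gt0.
Qed.

Lemma poa_attained_b (w1 w2 : R) : 0 <= w2 -> 2 * w2 <= w1 -> 0 < w1 ->
  poa_attained (@network_games R) w1 w2 (num_b w1 w2 / den_b w1 w2).
Proof.
move=> w2_ge0 le_w21 w1_gt0.
have [u u_ge0 w1E] : exists2 u, 0 <= u & w1 = 2 * w2 + u by exists (w1 - 2 * w2); [lra | ring].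
rewrite w1E in w1_gt0 *; rewrite -ratio_b //.
apply: (net_game_attained (L := paths_b)).
- exact: beta_b_ge0.
- exact: st_paths_b.
- by vm_compute.
- exact: ne_b_player1.
- exact: ne_b_player2.
- exact: opt_b_min.
- exact: opt_b_gt0.
Qed.

End Attained.

(** * Closed forms *)

Section ClosedForms.
Variable R : realType.

Lemma poa_a_sym (w1 w2 : R) : poa_a w1 w2 = poa_a w2 w1.
Proof. by rewrite /poa_a minC; congr (_ / _); ring. Qed.

Lemma poa_b_sym (w1 w2 : R) : poa_b w1 w2 = poa_b w2 w1.
Proof.
rewrite /poa_b.
have -> : w2 ^+ 4 + w2 ^+ 3 * w1 = w1 * w2 ^+ 3 + w2 ^+ 4 by ring.
have -> : w2 * w1 ^+ 3 + w1 ^+ 4 = w1 ^+ 4 + w1 ^+ 3 * w2 by ring.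
rewrite (maxC (w1 * _ + _)) (minC (w2 ^+ 2)) (maxC (w2 ^+ 4)) (minC (w2 ^+ 4)).
by congr (_ / _); ring.
Qed.

Lemma poa_aE (w1 w2 : R) : 0 <= w2 -> w2 <= w1 -> poa_a w1 w2 = num_a w1 w2 / den_a w1 w2.
Proof.
move=> w2_ge0 le_w21; rewrite /poa_a min_r; last by apply: lerXn2r; rewrite // nnegrE; lra.
by congr (_ / _); rewrite /num_a /den_a; ring.
Qed.

Lemma poa_bE (w1 w2 : R) : 0 <= w2 -> w2 <= w1 -> poa_b w1 w2 = num_b w1 w2 / den_b w1 w2.
Proof.
move=> w2_ge0 le_w21.
have le_pow n : w2 ^+ n <= w1 ^+ n by apply: lerXn2r; rewrite // nnegrE; lra.
have le_max : w1 * w2 ^+ 3 + w2 ^+ 4 <= w1 ^+ 4 + w1 ^+ 3 * w2.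
  have -> : w1 * w2 ^+ 3 + w2 ^+ 4 = w2 ^+ 3 * (w1 + w2) by ring.
  have -> : w1 ^+ 4 + w1 ^+ 3 * w2 = w1 ^+ 3 * (w1 + w2) by ring.
  by rewrite ler_wpM2r ?le_pow //; lra.
rewrite /poa_b (max_l le_max) (min_r (le_pow 2)) (max_l (le_pow 4)) (min_r (le_pow 4)).
by congr (_ / _); rewrite /num_b /den_b; ring.
Qed.

Lemma PoA_eq_ordered (s w1 w2 : R) : 0 <= w2 -> w2 <= w1 -> 0 < w1 ->
  0 < s -> s ^+ 4 - 3 * s ^+ 2 - 3 * s - 1 = 0 ->
  (w1 <= s * w2 -> PoA_eq_both w1 w2 (poa_a w1 w2)) /\
  (s * w2 <= w1 -> PoA_eq_both w1 w2 (poa_b w1 w2)).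
Proof.
move=> w2_ge0 le_w21 w1_gt0 s_gt0 s_root.
have s_cubic := sigma_cubic_root s_gt0 s_root.
have s_ge2 := sigma_ge2 s_gt0 s_cubic.
split=> [le_w1s | le_sw1].
- rewrite poa_aE //; apply: PoA_eq_both_of_bounds; last exact: poa_attained_a.
  by apply: poa_ub_a => //; apply: sigma_cubic_le0 s_cubic _ _ _ _.
- have le_2w21 : 2 * w2 <= w1 by apply: le_trans le_sw1; rewrite ler_wpM2r.
  rewrite poa_bE //.
  apply: PoA_eq_both_of_bounds; last exact: poa_attained_b.
  by apply: poa_ub_b => //; apply: sigma_cubic_ge0 s_cubic _ _ _.
Qed.

End ClosedForms.

Theorem theorem5 (R : realType) (w1 w2 sigma : R) :
  0 <= w1 -> 0 <= w2 -> 0 < w1 + w2 ->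
  0 < sigma -> sigma ^+ 4 - 3 * sigma ^+ 2 - 3 * sigma - 1 = 0 ->
  (w2 / sigma <= w1 <= sigma * w2 ->
     PoA_eq (@all_games R) w1 w2 (poa_a w1 w2) /\
     PoA_eq (@network_games R) w1 w2 (poa_a w1 w2)) /\
  ((sigma * w2 <= w1 \/ w1 <= w2 / sigma) ->
     PoA_eq (@all_games R) w1 w2 (poa_b w1 w2) /\
     PoA_eq (@network_games R) w1 w2 (poa_b w1 w2)).
Proof.
move=> w1_ge0 w2_ge0 w_gt0 s_gt0 s_root.
have s_ge2 := sigma_ge2 s_gt0 (sigma_cubic_root s_gt0 s_root).
rewrite ler_pdivrMr // ler_pdivlMr //.
have [le_w21 | lt_w12] := lerP w2 w1.
- have w1_gt0 : 0 < w1 by lra.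
  have [PoA_a PoA_b] := PoA_eq_ordered w2_ge0 le_w21 w1_gt0 s_gt0 s_root.
  split=> [/andP [_ le_w1s] | [le_sw1 | le_w1s]]; [exact: PoA_a | exact: PoA_b | exfalso; nra].
- have w2_gt0 : 0 < w2 by lra.
  have [PoA_a PoA_b] := PoA_eq_ordered w1_ge0 (ltW lt_w12) w2_gt0 s_gt0 s_root.
  rewrite poa_a_sym poa_b_sym.
  split=> [/andP [le_w2s _] | [le_sw1 | le_w1s]]; try (exfalso; nra);
    apply: PoA_eq_both_swap; [apply: PoA_a | apply: PoA_b]; lra.
Qed.
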